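(* Let $\Gamma$, $v$, $\Lambda$ be as in the context and suppose $v_n=o(V_n)$ as $n\to\infty$. If $\Lambda$ is an exact $v$-perturbation of $\Gamma$, then $\Lambda$ is a uniqueness sequence for $H_{(\Gamma,v)}$, i.e. there is no nonzero $a\in\ell^2_v$ such that $H_{(\Gamma,v)}a$ vanishes on $\Lambda$.
   Context: $\Gamma=(\gamma_n)_{n\ge1}$ are distinct complex numbers with $\inf_n|\gamma_{n+1}|/|\gamma_n|>1$; $v=(v_n)$ positive with $\sum_nv_n/(1+|\gamma_n|^2)<\infty$. $\ell^2_v=\{(a_n):\sum|a_n|^2v_n<\infty\}$; $H_{(\Gamma,v)}a(z)=\sum_na_nv_n/(z-\gamma_n)$, $z\in\mathbb{C}\setminus\Gamma$. $V_1=1$, $V_n=\sum_{j<n}v_j$; $P_n=\sum_{j>n}v_j/|\gamma_j|^2$. $\Omega_1=\{|z|<(|\gamma_1|+|\gamma_2|)/2\}$, $\Omega_n=\{(|\gamma_{n-1}|+|\gamma_n|)/2\le|z|<(|\gamma_n|+|\gamma_{n+1}|)/2\}$ ($n\ge2$); $D_n(v;M)=\{\lambda\in\Omega_n: Mv_n/|\lambda-\gamma_n|^2\ge\max(V_n/|\lambda|^2,P_n)\}$. $\Lambda$ is a sequence of distinct nonzero complex numbers disjoint from $\Gamma$, indexed $(\lambda_n)_{n\ge n_0}$ by consecutive integers with $|\lambda_n|$ increasing. $\Lambda$ is a $v$-perturbation of $\Gamma$ if $n_0$ can be chosen so that for some sufficiently large $M$, $\lambda_n\in D_n(v;M)$ for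 all but finitely many $n$; with this $n_0$, it is exact if $n_0=1$, of deficiency $n_0-1$ if $n_0>1$, of excess $1-n_0$ if $n_0<1$. *)

(* INDEXING CONVENTION: the paper's sequences are indexed from 1; here they
   are indexed from 0, i.e. [g k] stands for gamma_{k+1}, [v k] for v_{k+1},
   [a k] for a_{k+1}, [lam k] for lambda_{k+1}. *)
From Stdlib Require Import Reals.
From Coquelicot Require Import Coquelicot.
Open Scope R_scope.

Definition lacunary (g : nat -> C) : Prop :=
  (forall i j, g i = g j -> i = j) /\
  exists q : R, 1 < q /\ forall k, q * Cmod (g k) <= Cmod (g (S k)).

Definition admissible_weight (g : nat -> C) (v : nat -> R) : Prop :=
  (forall k, 0 < v k) /\
  ex_series (fun k => v k / (1 + Cmod (g k) ^ 2)).

Definition in_l2v (v : nat -> R) (a : nat -> C) : Prop :=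
  ex_series (fun k => Cmod (a k) ^ 2 * v k).

(* "H_(Gamma,v) a (z) = w": the series sum_n a_n v_n / (z - gamma_n) sums to w *)
Definition H_is (g : nat -> C) (v : nat -> R) (a : nat -> C) (z w : C) : Prop :=
  is_series (fun k => (a k * RtoC (v k) / (z - g k))%C) w.

(* V_n (paper, 1-based): V_1 = 1, V_n = sum_{j<n} v_j.
   0-based: Vs k = V_{k+1}. *)
Definition Vs (v : nat -> R) (k : nat) : R :=
  match k with
  | O => 1
  | S _ => sum_n v (pred k)
  end.

(* P_n = sum_{j>n} v_j / |gamma_j|^2 ; 0-based: Ps k = P_{k+1}. *)
Definition Ps (g : nat -> C) (v : nat -> R) (k : nat) : R :=
  Series (fun j => v (S k + j)%nat / Cmod (g (S k + j)%nat) ^ 2).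

Definition Omega (g : nat -> C) (k : nat) (z : C) : Prop :=
  match k with
  | O => Cmod z < (Cmod (g O) + Cmod (g 1%nat)) / 2
  | S k' => (Cmod (g k') + Cmod (g k)) / 2 <= Cmod z /\
            Cmod z < (Cmod (g k) + Cmod (g (S k))) / 2
  end.

Definition Dset (g : nat -> C) (v : nat -> R) (M : R) (k : nat) (z : C) : Prop :=
  Omega g k z /\
  Rmax (Vs v k / Cmod z ^ 2) (Ps g v k) <= M * v k / Cmod (z - g k)%C ^ 2.

Definition admissible_Lambda (g lam : nat -> C) : Prop :=
  (forall i j, lam i = lam j -> i = j) /\
  (forall k, lam k <> 0%C) /\
  (forall k j, lam k <> g j) /\
  (forall k, Cmod (lam k) <= Cmod (lam (S k))).

(* Lambda = (lambda_n)_{n>=1} (so n_0 = 1) is an exact v-perturbation of Gamma *)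
Definition exact_v_perturbation (g : nat -> C) (v : nat -> R) (lam : nat -> C) : Prop :=
  exists M : R, exists N : nat, forall k, (N <= k)%nat -> Dset g v M k (lam k).

Definition uniqueness_seq (g : nat -> C) (v : nat -> R) (lam : nat -> C) : Prop :=
  forall a : nat -> C, in_l2v v a -> (forall k, H_is g v a (lam k) 0%C) ->
    forall k, a k = 0%C.

From Stdlib Require Import Reals.
From Coquelicot Require Import Coquelicot.
From Stdlib Require Import Lra Lia Psatz.
Open Scope R_scope.

(* Fix m.  For n >= m the rational function G_{m,n} below has simple poles at lam_0, ..., lam_n
   and vanishes at every g_j with j <= n, j <> m, so it is a combination of the kernels
   1 / (w - lam_k).  As H a vanishes on Lambda, sum_j a_j v_j G_{m,n}(g_j) = 0, which leaves
     a_m v_m G_{m,n}(g_m) = - sum_{j > n} a_j v_j G_{m,n}(g_j).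
   Lacunarity of Gamma, the location lam_k in D_k, and v_k = o(V_k) (which forces
   lam_k / g_k -> 1 and at most geometric growth of v) give, for large n and j > n,
     v_j |G_{m,n}(g_j) / G_{m,n}(g_m)|^2 <= C theta^j  with theta < 1.
   By AM-GM, |a_m| v_m is then bounded by the tail beyond n of the convergent series
   sum_j (|a_j|^2 v_j + C theta^j) / 2, so a_m = 0. *)

Lemma Cminus_neq0 (x y : C) : x <> y -> (x - y)%C <> 0%C.
Proof. intros Hxy E. apply Hxy. replace x with ((x - y) + y)%C by ring. rewrite E; ring. Qed.

Lemma Cmod_sub_sym (x y : C) : Cmod (x - y) = Cmod (y - x).
Proof. replace (x - y)%C with (- (y - x))%C by ring. apply Cmod_opp. Qed.

Lemma Cmod_sub_le (x y : C) : Cmod (x - y) <= Cmod x + Cmod y.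
Proof. unfold Cminus. rewrite <- (Cmod_opp y). apply Cmod_triangle. Qed.

Lemma Cmod_sub_ge (x y : C) : Cmod x - Cmod y <= Cmod (x - y).
Proof. pose proof (Cmod_triangle (x - y) y). replace (x - y + y)%C with x in H by ring. lra. Qed.

Lemma ratio_le A A' B B' : 0 <= A <= A' -> 0 < B' <= B -> A / B <= A' / B'.
Proof.
  intros HA HB. unfold Rdiv. apply Rmult_le_compat; try lra.
  - left; apply Rinv_0_lt_compat; lra.
  - apply Rinv_le_contravar; lra.
Qed.

Lemma ratio_nonneg a b : 0 <= a -> 0 <= b -> 0 <= a / b.
Proof.
  intros Ha Hb. destruct (Req_dec b 0) as [->|Hb0].
  - unfold Rdiv. rewrite Rinv_0. lra.
  - apply Rdiv_le_0_compat; lra.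
Qed.

Lemma Cmult_neq0 (x y : C) : x <> 0%C -> y <> 0%C -> (x * y)%C <> 0%C.
Proof.
  intros Hx Hy. apply Cmod_gt_0 in Hx, Hy. apply Cmod_gt_0. rewrite Cmod_mult. nra.
Qed.

Lemma Cinv_neq0 (x : C) : x <> 0%C -> (/ x)%C <> 0%C.
Proof.
  intros Hx. apply Cmod_gt_0. rewrite Cmod_inv by auto.
  apply Rinv_0_lt_compat, Cmod_gt_0, Hx.
Qed.

Fixpoint prodR (f : nat -> R) (n : nat) : R :=
  match n with O => 1 | S n' => prodR f n' * f n' end.

Lemma prodR_ext f h n : (forall i, (i < n)%nat -> f i = h i) -> prodR f n = prodR h n.
Proof.
  induction n as [|n IH]; intros Hfh; simpl; [reflexivity|].
  rewrite IH, Hfh; auto.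
Qed.

Lemma prodR_mult f h n : prodR (fun i => f i * h i) n = prodR f n * prodR h n.
Proof. induction n as [|n IH]; simpl; [ring|]. rewrite IH; ring. Qed.

Lemma prodR_inv f n : prodR (fun i => / f i) n = / prodR f n.
Proof. induction n as [|n IH]; simpl; [now rewrite Rinv_1|]. now rewrite IH, Rinv_mult. Qed.

Lemma prodR_nonneg f n : (forall i, (i < n)%nat -> 0 <= f i) -> 0 <= prodR f n.
Proof.
  induction n as [|n IH]; intros Hf; simpl; [lra|].
  apply Rmult_le_pos; [apply IH; intros|]; apply Hf; lia.
Qed.

Lemma prodR_ge1 f n : (forall i, (i < n)%nat -> 1 <= f i) -> 1 <= prodR f n.
Proof.
  induction n as [|n IH]; intros Hf; simpl; [lra|].
  assert (1 <= prodR f n) by (apply IH; intros; apply Hf; lia).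
  assert (1 <= f n) by (apply Hf; lia).
  nra.
Qed.

Lemma prodR_le f h n : (forall i, (i < n)%nat -> 0 <= f i <= h i) -> prodR f n <= prodR h n.
Proof.
  induction n as [|n IH]; intros Hfh; simpl; [lra|].
  apply Rmult_le_compat.
  - apply prodR_nonneg; intros; apply Hfh; lia.
  - apply Hfh; lia.
  - apply IH; intros; apply Hfh; lia.
  - apply Hfh; lia.
Qed.

Lemma prodR_le_pow_split f L rho K n : 1 <= L -> 1 <= rho ->
  (forall i, 0 <= f i <= L * rho) -> (forall i, (K <= i)%nat -> f i <= rho) ->
  prodR f n <= L ^ K * rho ^ n.
Proof.
  intros HL Hrho Hf Hlate.
  enough (Hmin : prodR f n <= L ^ Nat.min n K * rho ^ n).
  { eapply Rle_trans; [exact Hmin|].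
    apply Rmult_le_compat_r; [apply pow_le; lra|]. apply Rle_pow; [lra | lia]. }
  induction n as [|n IH]; [simpl; lra|].
  assert (0 <= prodR f n) by (apply prodR_nonneg; intros; apply Hf).
  destruct (Nat.lt_ge_cases n K) as [Hn|Hn].
  - replace (Nat.min (S n) K) with (S (Nat.min n K)) by lia.
    apply Rle_trans with (L ^ Nat.min n K * rho ^ n * (L * rho)); [|simpl; lra].
    apply Rmult_le_compat; auto; apply Hf.
  - replace (Nat.min (S n) K) with (Nat.min n K) by lia.
    apply Rle_trans with (L ^ Nat.min n K * rho ^ n * rho); [|simpl; lra].
    apply Rmult_le_compat; auto; apply Hf.
Qed.

Lemma ub_initial_segment (f : nat -> R) K : exists B, 1 <= B /\ forall i, (i < K)%nat -> f i <= B.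
Proof.
  induction K as [|K [B [HB HfB]]].
  - exists 1. split; [lra | intros; lia].
  - exists (Rmax B (f K)). split; [eapply Rle_trans; [exact HB | apply Rmax_l]|].
    intros i Hi. destruct (Nat.eq_dec i K) as [->|Hne]; [apply Rmax_r|].
    eapply Rle_trans; [apply HfB; lia | apply Rmax_l].
Qed.

Lemma prodR_eventually_le f rho K : 1 <= rho -> (forall i, 0 <= f i) ->
  (forall i, (K <= i)%nat -> f i <= rho) ->
  exists A, 0 < A /\ forall n, prodR f n <= A * rho ^ n.
Proof.
  intros Hrho Hf Hlate.
  destruct (ub_initial_segment f K) as [B [HB HfB]].
  exists (B ^ K). split; [apply pow_lt; lra|]. intros n.
  apply prodR_le_pow_split; auto.
  intros i; split; [auto|]. destruct (Nat.lt_ge_cases i K) as [Hi|Hi].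
  - specialize (HfB i Hi). nra.
  - specialize (Hlate i Hi). nra.
Qed.

Lemma prodR_le_rev f b n j : (n <= j)%nat -> (forall t, 1 <= b t) ->
  (forall i, (i < n)%nat -> 0 <= f i <= b (j - S i)%nat) -> prodR f n <= prodR b j.
Proof.
  intros Hnj Hb Hf.
  assert (Hgen : forall k, (k <= n)%nat -> prodR f k * prodR b (j - k) <= prodR b j).
  { induction k as [|k IH]; intros Hk.
    - rewrite Nat.sub_0_r. simpl. lra.
    - replace (j - k)%nat with (S (j - S k)) in IH by lia. simpl in IH |- *.
      assert (0 <= prodR f k) by (apply prodR_nonneg; intros; apply Hf; lia).
      assert (0 <= prodR b (j - S k)) by (apply prodR_nonneg; intros; specialize (Hb i); lra).
      destruct (Hf k) as [Hf0 Hfb]; [lia|].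
      eapply Rle_trans; [|apply IH; lia].
      replace (prodR f k * f k * prodR b (j - S k))
        with (prodR f k * (prodR b (j - S k) * f k)) by ring.
      apply Rmult_le_compat_l; [|apply Rmult_le_compat_l]; auto. }
  specialize (Hgen n (le_n n)).
  assert (1 <= prodR b (j - n)) by (apply prodR_ge1; auto).
  assert (0 <= prodR f n) by (apply prodR_nonneg; intros; apply Hf; lia).
  nra.
Qed.

(** * Lacunary sequences and weights *)

Definition omega_ratio (q : R) : R := (q + 1) / (2 * q).

Lemma omega_ratio_bounds q : 1 < q -> 0 < omega_ratio q < 1.
Proof.
  intros Hq. unfold omega_ratio. split; [apply Rdiv_lt_0_compat; lra|].
  apply Rmult_lt_reg_r with (2 * q); [lra|]. field_simplify; lra.
Qed.

Section Lacunary.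

Variables (g : nat -> C) (q : R).
Hypothesis q_gt1 : 1 < q.
Hypothesis g_growth : forall k, q * Cmod (g k) <= Cmod (g (S k)).

Lemma lacunary_pow t k : q ^ t * Cmod (g k) <= Cmod (g (k + t)%nat).
Proof.
  induction t as [|t IH].
  - rewrite Nat.add_0_r. simpl. lra.
  - rewrite Nat.add_succ_r. simpl. specialize (g_growth (k + t)%nat).
    pose proof (Cmod_ge_0 (g k)). nra.
Qed.

Lemma lacunary_le_inv_pow t k : Cmod (g k) <= (/ q) ^ t * Cmod (g (k + t)%nat).
Proof.
  assert (Hqt : 0 < q ^ t) by (apply pow_lt; lra).
  rewrite pow_inv. apply (Rmult_le_reg_l (q ^ t)); [exact Hqt|].
  rewrite <- Rmult_assoc, Rinv_r, Rmult_1_l by lra. apply lacunary_pow.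
Qed.

Lemma lacunary_mono k j : (k <= j)%nat -> Cmod (g k) <= Cmod (g j).
Proof.
  intros Hkj. replace j with (k + (j - k))%nat by lia.
  pose proof (lacunary_pow (j - k) k). pose proof (Cmod_ge_0 (g k)).
  assert (1 <= q ^ (j - k)) by (apply pow_R1_Rle; lra). nra.
Qed.

Hypothesis g_inj : forall i j, g i = g j -> i = j.

Lemma lacunary_pos j : (1 <= j)%nat -> 0 < Cmod (g j).
Proof.
  intros Hj. apply Rlt_le_trans with (Cmod (g 1%nat)); [|apply lacunary_mono; lia].
  destruct (Rle_lt_dec (Cmod (g 1%nat)) 0) as [Hle|]; [exfalso|auto].
  pose proof (g_growth O). pose proof (Cmod_ge_0 (g O)). pose proof (Cmod_ge_0 (g 1%nat)).
  assert (Hg0 : g O = 0%C) by (apply Cmod_eq_0; nra).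
  assert (Hg1 : g 1%nat = 0%C) by (apply Cmod_eq_0; lra).
  assert (O = 1%nat) by (apply g_inj; congruence). lia.
Qed.

Lemma lacunary_geometric_lb : exists c, 0 < c /\ forall j, (1 <= j)%nat -> c * q ^ j <= Cmod (g j).
Proof.
  exists (Cmod (g 1%nat) / q).
  split; [apply Rdiv_lt_0_compat; [apply lacunary_pos; lia | lra]|].
  intros j Hj. pose proof (lacunary_pow (j - 1) 1) as Hpow.
  replace (1 + (j - 1))%nat with j in Hpow by lia.
  replace (q ^ j) with (q * q ^ (j - 1)) by (replace j with (S (j - 1)) at 2 by lia; reflexivity).
  replace (Cmod (g 1%nat) / q * (q * q ^ (j - 1))) with (q ^ (j - 1) * Cmod (g 1%nat))
    by (field; lra).
  exact Hpow.
Qed.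

Lemma Omega_Cmod_le k z : Omega g k z -> Cmod z <= omega_ratio q * Cmod (g (S k)).
Proof.
  intros HO.
  assert (Hub : Cmod z < (Cmod (g k) + Cmod (g (S k))) / 2) by (destruct k; apply HO).
  specialize (g_growth k).
  replace (omega_ratio q * Cmod (g (S k))) with ((Cmod (g (S k)) / q + Cmod (g (S k))) / 2)
    by (unfold omega_ratio; field; lra).
  assert (Cmod (g k) <= Cmod (g (S k)) / q)
    by (apply (Rmult_le_reg_l q); [lra|]; field_simplify; lra).
  lra.
Qed.

End Lacunary.

Lemma Vs_pos v : (forall k, 0 < v k) -> forall k, 0 < Vs v k.
Proof.
  intros Hv [|k]; simpl; [lra|].
  induction k as [|k IH]; [rewrite sum_O; apply Hv|].
  rewrite sum_Sn. specialize (Hv (S k)). change (0 < sum_n v k + v (S k)). lra.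
Qed.

Lemma Vs_S v k : (1 <= k)%nat -> Vs v (S k) = Vs v k + v k.
Proof. intros Hk. destruct k as [|k]; [lia|]. unfold Vs. simpl pred. now rewrite sum_Sn. Qed.

Lemma weight_eventually_small v eps : (forall k, 0 < v k) ->
  is_lim_seq (fun k => v k / Vs v k) 0 -> 0 < eps ->
  exists K, forall k, (K <= k)%nat -> v k <= eps * Vs v k.
Proof.
  intros Hv Hlim Heps. apply is_lim_seq_spec in Hlim.
  destruct (Hlim (mkposreal _ Heps)) as [K HK]. exists K. intros k Hk.
  specialize (HK k Hk). simpl in HK. rewrite Rminus_0_r in HK.
  pose proof (Vs_pos v Hv k). apply Rabs_def2 in HK. destruct HK as [HK _].
  apply (Rmult_le_reg_r (/ Vs v k)); [apply Rinv_0_lt_compat; lra|].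
  replace (eps * Vs v k * / Vs v k) with eps by (field; lra). unfold Rdiv in HK. lra.
Qed.

Lemma weight_le_geometric v rho : (forall k, 0 < v k) ->
  is_lim_seq (fun k => v k / Vs v k) 0 -> 1 < rho ->
  exists K A, 0 < A /\ forall j, (K <= j)%nat -> v j <= A * rho ^ j.
Proof.
  intros Hv Hlim Hrho.
  destruct (weight_eventually_small v (rho - 1) Hv Hlim) as [K0 HK0]; [lra|].
  set (K := Nat.max K0 1).
  assert (HVK := Vs_pos v Hv K).
  assert (HV : forall t, Vs v (K + t) <= rho ^ t * Vs v K).
  { induction t as [|t IH]; [rewrite Nat.add_0_r; simpl; lra|].
    rewrite Nat.add_succ_r, Vs_S by lia. specialize (HK0 (K + t)%nat ltac:(lia)).
    simpl. nra. }
  exists K, (rho * Vs v K). split; [nra|]. intros j Hj.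
  specialize (HK0 j ltac:(lia)). specialize (HV (j - K)%nat).
  replace (K + (j - K))%nat with j in HV by lia.
  assert (rho ^ (j - K) <= rho ^ j) by (apply Rle_pow; [lra | lia]).
  pose proof (Vs_pos v Hv j).
  apply Rle_trans with (rho * Vs v j); [nra|].
  apply Rle_trans with (rho * (rho ^ (j - K) * Vs v K)); [apply Rmult_le_compat_l; lra|].
  replace (rho * Vs v K * rho ^ j) with (rho * (rho ^ j * Vs v K)) by ring.
  apply Rmult_le_compat_l; [lra|]. apply Rmult_le_compat_r; lra.
Qed.

Lemma Dset_dist_le (g : nat -> C) (v : nat -> R) (M : R) (k : nat) (z : C) (eta : R) :
  0 < Vs v k -> z <> g k -> z <> 0%C ->
  Dset g v M k z -> M * v k <= eta ^ 2 * Vs v k -> 0 <= eta ->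
  Cmod (z - g k) <= eta * Cmod z.
Proof.
  intros HV Hzg Hz [_ HD] HM Heta.
  assert (Hd : 0 < Cmod (z - g k)) by (apply Cmod_gt_0, Cminus_neq0; auto).
  assert (Hl : 0 < Cmod z) by (apply Cmod_gt_0; auto).
  set (d := Cmod (z - g k)) in *. set (l := Cmod z) in *.
  assert (Hcross : Vs v k * d ^ 2 <= M * v k * l ^ 2).
  { replace (Vs v k * d ^ 2) with (Vs v k / l ^ 2 * (l ^ 2 * d ^ 2)) by (field; lra).
    replace (M * v k * l ^ 2) with (M * v k / d ^ 2 * (l ^ 2 * d ^ 2)) by (field; lra).
    apply Rmult_le_compat_r; [nra|]. eapply Rle_trans; [apply Rmax_l | exact HD]. }
  assert (d ^ 2 <= (eta * l) ^ 2) by nra.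
  assert (0 <= eta * l) by nra.
  destruct (Rle_lt_dec d (eta * l)) as [|Hlt]; [assumption | nra].
Qed.

Definition late_factor (q : R) (t : nat) : R :=
  (1 + (/ q) ^ S t) / (1 - omega_ratio q * (/ q) ^ t).

Lemma inv_pow_bounds q t : 1 < q -> 0 < (/ q) ^ t <= 1.
Proof.
  intros Hq. split; [apply pow_lt, Rinv_0_lt_compat; lra|].
  rewrite pow_inv, <- Rinv_1. apply Rinv_le_contravar; [lra | apply pow_R1_Rle; lra].
Qed.

Lemma late_factor_ge1 q t : 1 < q -> 1 <= late_factor q t.
Proof.
  intros Hq. pose proof (omega_ratio_bounds q Hq).
  pose proof (inv_pow_bounds q t Hq). pose proof (inv_pow_bounds q (S t) Hq).
  replace 1 with (1 / 1) at 1 by field. apply ratio_le; nra.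
Qed.

Lemma late_factor_lim q : 1 < q -> is_lim_seq (late_factor q) 1.
Proof.
  intros Hq.
  assert (Hgeom : is_lim_seq (fun t => (/ q) ^ t) 0).
  { apply is_lim_seq_geom. rewrite Rabs_pos_eq by (left; apply Rinv_0_lt_compat; lra).
    rewrite <- Rinv_1. apply Rinv_lt_contravar; lra. }
  replace 1 with ((1 + 0) / (1 - omega_ratio q * 0)) by field.
  apply is_lim_seq_div'.
  - apply is_lim_seq_plus'; [apply is_lim_seq_const|].
    exact (proj1 (is_lim_seq_incr_1 _ _) Hgeom).
  - apply is_lim_seq_minus'; [apply is_lim_seq_const|].
    apply is_lim_seq_mult'; [apply is_lim_seq_const | exact Hgeom].
  - lra.
Qed.

Lemma late_factor_eventually_le q rho : 1 < q -> 1 < rho ->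
  exists T, forall t, (T <= t)%nat -> late_factor q t <= rho.
Proof.
  intros Hq Hrho. pose proof (late_factor_lim q Hq) as Hlim. apply is_lim_seq_spec in Hlim.
  assert (Heps : 0 < rho - 1) by lra.
  destruct (Hlim (mkposreal _ Heps)) as [T HT]. exists T. intros t Ht.
  specialize (HT t Ht). apply Rabs_def2 in HT. simpl in HT. lra.
Qed.

(** * Partial fractions and the functions G_{m,n} *)

Definition pf_span (lam : nat -> C) (n : nat) (F : C -> C) : Prop :=
  exists c : nat -> C, forall w, (forall k, (k <= n)%nat -> w <> lam k) ->
    F w = sum_n (fun k => c k / (w - lam k))%C n.

Lemma pf_span_base (lam : nat -> C) : pf_span lam 0 (fun w => / (w - lam O))%C.
Proof.
  exists (fun _ => 1%C). intros w Hw. rewrite sum_O. field. apply Cminus_neq0, Hw; lia.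
Qed.

Lemma pf_span_mult_factor (lam : nat -> C) (n : nat) (F : C -> C) (b : C) :
  pf_span lam n F -> (forall k, (k <= n)%nat -> lam k <> lam (S n)) ->
  pf_span lam (S n) (fun w => F w * ((w - b) / (w - lam (S n))))%C.
Proof.
  intros [c Hc] Hdist. set (L := lam (S n)).
  (* partial fractions: c k (w - b) / ((w - lam k) (w - L)) = A k / (w - lam k) + B k / (w - L) *)
  set (A := fun k => (c k * (lam k - b) / (lam k - L))%C).
  set (B := fun k => (c k * (L - b) / (L - lam k))%C).
  exists (fun k => if Nat.leb k n then A k else sum_n B n).
  intros w Hw.
  assert (HwL : (w - L)%C <> 0%C) by (apply Cminus_neq0, Hw; lia).
  rewrite Hc by (intros k Hk; apply Hw; lia).
  rewrite sum_Sn. replace (Nat.leb (S n) n) with false by (symmetry; apply Nat.leb_gt; lia).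
  rewrite (sum_n_ext_loc (fun k => (if Nat.leb k n then A k else sum_n B n) / (w - lam k))%C
                         (fun k => A k / (w - lam k))%C)
    by (intros k Hk; now rewrite (proj2 (Nat.leb_le k n) Hk)).
  transitivity (sum_n (fun k => A k / (w - lam k) + B k * / (w - L))%C n).
  - transitivity (sum_n (fun k => c k / (w - lam k) * ((w - b) / (w - L)))%C n).
    + now rewrite (@sum_n_mult_r C_Ring).
    + apply sum_n_ext_loc. intros k Hk.
      assert ((w - lam k)%C <> 0%C) by (apply Cminus_neq0, Hw; lia).
      assert ((lam k - L)%C <> 0%C) by (apply Cminus_neq0, Hdist; auto).
      assert ((L - lam k)%C <> 0%C) by (apply Cminus_neq0; intros E; apply (Hdist k Hk); auto).
      assert (E : (c k / (w - lam k) * ((w - b) / (w - L))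
                   = A k / (w - lam k) + B k * / (w - L))%C) by (unfold A, B; field; auto).
      exact E.
  - rewrite (@sum_n_plus C_AbelianMonoid), (@sum_n_mult_r C_Ring). reflexivity.
Qed.

Definition skip (m i : nat) : nat := if Nat.ltb i m then i else S i.

Lemma skip_neq m i : skip m i <> m.
Proof. unfold skip. destruct (Nat.ltb_spec i m); lia. Qed.

Lemma skip_le m i : (skip m i <= S i)%nat.
Proof. unfold skip. destruct (Nat.ltb i m); lia. Qed.

Lemma skip_late m i : (m <= i)%nat -> skip m i = S i.
Proof. intros Hmi. unfold skip. destruct (Nat.ltb_spec i m); lia. Qed.

(* The paper's G_{m,n}; the zeros g (skip m i), i < n, are the nodes g_0, ..., g_n except g_m. *)
Fixpoint Gmn (g lam : nat -> C) (m n : nat) (w : C) : C :=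
  match n with
  | O => (/ (w - lam O))%C
  | S n' => (Gmn g lam m n' w * ((w - g (skip m n')) / (w - lam (S n'))))%C
  end.

Lemma Gmn_pf_span (g lam : nat -> C) m n : (forall i j, lam i = lam j -> i = j) ->
  pf_span lam n (Gmn g lam m n).
Proof.
  intros Hinj. induction n as [|n IH]; [apply pf_span_base|].
  apply pf_span_mult_factor; auto. intros k Hk E. apply Hinj in E. lia.
Qed.

Lemma Gmn_zero_at (g lam : nat -> C) m n j : (m <= n)%nat -> (j <= n)%nat -> j <> m ->
  Gmn g lam m n (g j) = 0%C.
Proof.
  intros Hmn Hjn Hjm.
  assert (Hi : exists i, (i < n)%nat /\ skip m i = j).
  { destruct (Nat.lt_ge_cases j m).
    - exists j. unfold skip. rewrite (proj2 (Nat.ltb_lt j m)) by auto. split; [lia | auto].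
    - exists (j - 1)%nat. rewrite skip_late by lia. split; lia. }
  destruct Hi as [i [Hi <-]]. clear Hjn Hjm Hmn.
  induction n as [|n IH]; [lia|]. simpl.
  destruct (Nat.eq_dec i n) as [->|Hne].
  - replace (g (skip m n) - g (skip m n))%C with (RtoC 0) by ring. unfold Cdiv. ring.
  - rewrite IH by lia. ring.
Qed.

Lemma Gmn_nonzero_at_m (g lam : nat -> C) m n : (forall i j, g i = g j -> i = j) ->
  (forall k j, lam k <> g j) -> Gmn g lam m n (g m) <> 0%C.
Proof.
  intros Hg Hlg. induction n as [|n IH]; simpl.
  - apply Cinv_neq0, Cminus_neq0. intros E. apply (Hlg O m); auto.
  - apply Cmult_neq0; auto. apply Cmult_neq0.
    + apply Cminus_neq0. intros E. apply Hg in E. apply (skip_neq m n); auto.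
    + apply Cinv_neq0, Cminus_neq0. intros E. apply (Hlg (S n) m); auto.
Qed.

Lemma Cmod_Gmn (g lam : nat -> C) m n w : (forall k, w <> lam k) ->
  Cmod (Gmn g lam m n w) = / Cmod (w - lam O) *
    prodR (fun i => Cmod (w - g (skip m i)) / Cmod (w - lam (S i))) n.
Proof.
  intros Hw. induction n as [|n IH]; cbn [Gmn prodR].
  - rewrite Cmod_inv by (apply Cminus_neq0; auto). ring.
  - rewrite Cmod_mult, IH, Cmod_div by (apply Cminus_neq0; auto). ring.
Qed.

Lemma is_series_sum_n_null (A : nat -> nat -> C) n :
  (forall k, is_series (A k) (RtoC 0)) -> is_series (fun j => sum_n (fun k => A k j) n) (RtoC 0).
Proof.
  intros HA. induction n as [|n IH].
  - eapply is_series_ext; [|exact (HA O)]. intros j. now rewrite sum_O.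
  - pose proof (is_series_plus _ _ _ _ IH (HA (S n))) as H.
    replace (RtoC 0) with (plus (RtoC 0) (RtoC 0)) by (change (RtoC 0 + RtoC 0 = RtoC 0)%C; ring).
    eapply is_series_ext; [|exact H]. intros j. now rewrite sum_Sn.
Qed.

Lemma pf_span_series (g : nat -> C) (v : nat -> R) (a lam : nat -> C) n F :
  (forall k, H_is g v a (lam k) 0%C) -> (forall k j, lam k <> g j) -> pf_span lam n F ->
  is_series (fun j => a j * RtoC (v j) * F (g j))%C (RtoC 0).
Proof.
  intros HH Hlg [c Hc].
  assert (Hk : forall k,
    is_series (fun j => - c k * (a j * RtoC (v j) / (lam k - g j)))%C (RtoC 0)).
  { intros k. pose proof (is_series_scal (- c k)%C _ _ (HH k)) as Hs.
    replace (RtoC 0) with (scal (- c k)%C (RtoC 0)) by (change (- c k * RtoC 0 = RtoC 0)%C; ring).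
    exact Hs. }
  eapply is_series_ext; [|exact (is_series_sum_n_null _ n Hk)]. intros j. symmetry.
  rewrite Hc by (intros k _ E; apply (Hlg k j); auto).
  transitivity (sum_n (fun k => a j * RtoC (v j) * (c k / (g j - lam k)))%C n).
  { now rewrite (@sum_n_mult_l C_Ring). }
  apply sum_n_ext_loc. intros k _.
  assert ((lam k - g j)%C <> 0%C) by (apply Cminus_neq0; auto).
  assert ((g j - lam k)%C <> 0%C) by (apply Cminus_neq0; intros E; apply (Hlg k j); auto).
  assert (E : (a j * RtoC (v j) * (c k / (g j - lam k))
               = - c k * (a j * RtoC (v j) / (lam k - g j)))%C) by (field; auto).
  exact E.
Qed.

Lemma sum_n_single (T : nat -> C) m n : (m <= n)%nat ->
  (forall j, (j <= n)%nat -> j <> m -> T j = RtoC 0) -> sum_n T n = T m.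
Proof.
  intros Hmn HT.
  assert (Hzero : forall k, (k < m)%nat -> sum_n T k = RtoC 0).
  { induction k as [|k IH]; intros Hk; [rewrite sum_O; apply HT; lia|].
    rewrite sum_Sn, IH, HT by lia. change (RtoC 0 + RtoC 0 = RtoC 0)%C. ring. }
  revert HT. induction Hmn as [|n Hmn IH]; intros HT.
  - destruct m as [|m]; [apply sum_O|].
    rewrite sum_Sn, Hzero by lia. change (RtoC 0 + T (S m) = T (S m))%C. ring.
  - rewrite sum_Sn, IH by (intros; apply HT; lia). rewrite (HT (S n)) by lia.
    change (T m + RtoC 0 = T m)%C. ring.
Qed.

Lemma is_series_tail_single (T : nat -> C) m n : (m <= n)%nat ->
  (forall j, (j <= n)%nat -> j <> m -> T j = RtoC 0) ->
  is_series T (RtoC 0) -> is_series (fun k => T (S n + k)%nat) (- T m)%C.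
Proof.
  intros Hmn HT Hser. apply is_series_incr_n; [lia|].
  simpl pred.
  assert (Hsum : @sum_n (NormedModule.AbelianMonoid C_AbsRing C_NormedModule) T n = T m)
    by exact (sum_n_single T m n Hmn HT).
  rewrite Hsum.
  assert (Hcancel : @plus (NormedModule.AbelianMonoid C_AbsRing C_NormedModule) (- T m)%C (T m)
                    = RtoC 0) by (change (- T m + T m = RtoC 0)%C; ring).
  rewrite Hcancel. exact Hser.
Qed.

Lemma Cmod_series_le (b : nat -> C) (l : C) (e : nat -> R) :
  is_series b l -> (forall n, Cmod (b n) <= e n) -> ex_series e -> Cmod l <= Series e.
Proof.
  intros Hb He [s Hs]. rewrite (is_series_unique e s Hs).
  assert (Hpartial : forall N, Cmod (sum_n b N) <= sum_n e N).
  { induction N as [|N IH]; [rewrite !sum_O; auto|].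
    rewrite !sum_Sn. eapply Rle_trans; [apply Cmod_triangle|]. apply Rplus_le_compat; auto. }
  assert (Hlim : is_lim_seq (fun N => Cmod (sum_n b N)) (Cmod l)).
  { change (Cmod l) with (@norm C_AbsRing C_NormedModule l).
    apply filterlim_ext with (fun N => @norm C_AbsRing C_NormedModule (sum_n b N)); [reflexivity|].
    eapply filterlim_comp; [exact Hb | apply filterlim_norm]. }
  exact (is_lim_seq_le _ (sum_n e) _ s Hpartial Hlim Hs).
Qed.

Lemma Series_tail_lim (w : nat -> R) : ex_series w ->
  is_lim_seq (fun n => Series (fun k => w (S n + k)%nat)) 0.
Proof.
  intros Hw.
  apply is_lim_seq_ext with (fun n => Series w - sum_n w n).
  { intros n. rewrite (Series_incr_n w (S n)) by (auto; lia).
    simpl pred. rewrite sum_n_Reals. ring. }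
  replace 0 with (Series w - Series w) by ring.
  apply is_lim_seq_minus'; [apply is_lim_seq_const | apply Series_correct, Hw].
Qed.

(** * The uniqueness argument *)

Section Uniqueness.

Variables (g : nat -> C) (v : nat -> R) (lam : nat -> C) (q M : R) (N0 : nat).
Hypothesis g_inj : forall i j, g i = g j -> i = j.
Hypothesis q_gt1 : 1 < q.
Hypothesis g_growth : forall k, q * Cmod (g k) <= Cmod (g (S k)).
Hypothesis v_pos : forall k, 0 < v k.
Hypothesis v_small : is_lim_seq (fun k => v k / Vs v k) 0.
Hypothesis lam_inj : forall i j, lam i = lam j -> i = j.
Hypothesis lam_nonzero : forall k, lam k <> 0%C.
Hypothesis lam_off_g : forall k j, lam k <> g j.
Hypothesis lam_step : forall k, Cmod (lam k) <= Cmod (lam (S k)).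
Hypothesis lam_in_D : forall k, (N0 <= k)%nat -> Dset g v M k (lam k).

Lemma lam_near_gamma eps : 0 < eps ->
  exists K, forall k, (K <= k)%nat -> Cmod (lam k - g k) <= eps * Cmod (g k).
Proof.
  intros Heps. set (eta := Rmin (1 / 2) (eps / 2)).
  assert (Heta : 0 < eta <= 1 / 2) by (split; [apply Rmin_pos; lra | apply Rmin_l]).
  assert (Heta_eps : 2 * eta <= eps) by (pose proof (Rmin_r (1 / 2) (eps / 2)); unfold eta; lra).
  assert (HM : 0 < eta ^ 2 / (Rabs M + 1)).
  { apply Rdiv_lt_0_compat; [nra | pose proof (Rabs_pos M); lra]. }
  destruct (weight_eventually_small v _ v_pos v_small HM) as [K HK].
  exists (Nat.max K N0). intros k Hk.
  assert (Hclose : Cmod (lam k - g k) <= eta * Cmod (lam k)).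
  { apply (Dset_dist_le g v M k); auto; try lra.
    - apply Vs_pos, v_pos.
    - apply lam_in_D; lia.
    - specialize (HK k ltac:(lia)). pose proof (Rle_abs M). pose proof (v_pos k).
      apply Rle_trans with ((Rabs M + 1) * v k); [nra|].
      replace (eta ^ 2 * Vs v k) with ((Rabs M + 1) * (eta ^ 2 / (Rabs M + 1) * Vs v k))
        by (field; pose proof (Rabs_pos M); lra).
      apply Rmult_le_compat_l; [pose proof (Rabs_pos M); lra | exact HK]. }
  assert (Cmod (lam k) <= Cmod (g k) + Cmod (lam k - g k)).
  { replace (lam k) with (g k + (lam k - g k))%C at 1 by ring. apply Cmod_triangle. }
  pose proof (Cmod_ge_0 (lam k - g k)). pose proof (Cmod_ge_0 (g k)). nra.
Qed.

Lemma lam_rel_close m rho : 1 < rho ->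
  exists K, forall k, (K <= k)%nat -> Cmod (g m - lam k) <= rho * Cmod (g m - g k).
Proof.
  intros Hrho.
  assert (Hinvq : / q < 1) by (rewrite <- Rinv_1; apply Rinv_lt_contravar; lra).
  destruct (lam_near_gamma ((rho - 1) * (1 - / q))) as [K HK]; [nra|].
  exists (Nat.max K (S m)). intros k Hk. specialize (HK k ltac:(lia)).
  assert (Hgap : (1 - / q) * Cmod (g k) <= Cmod (g m - g k)).
  { assert (Hm : q * Cmod (g m) <= Cmod (g k)).
    { pose proof (g_growth (k - 1)) as Hstep. replace (S (k - 1)) with k in Hstep by lia.
      pose proof (lacunary_mono g q q_gt1 g_growth m (k - 1) ltac:(lia)). nra. }
    assert (Cmod (g m) <= / q * Cmod (g k)).
    { apply (Rmult_le_reg_l q); [lra|].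
      rewrite <- Rmult_assoc, Rinv_r, Rmult_1_l by lra. exact Hm. }
    rewrite Cmod_sub_sym. pose proof (Cmod_sub_ge (g k) (g m)). lra. }
  assert (Htri : Cmod (g m - lam k) <= Cmod (g m - g k) + Cmod (lam k - g k)).
  { replace (g m - lam k)%C with ((g m - g k) + (g k - lam k))%C by ring.
    rewrite (Cmod_sub_sym (lam k)). apply Cmod_triangle. }
  pose proof (Cmod_ge_0 (g k)). nra.
Qed.

Lemma lam_Cmod_mono k l : (k <= l)%nat -> Cmod (lam k) <= Cmod (lam l).
Proof. induction 1 as [|l _ IH]; [lra|]. specialize (lam_step l). lra. Qed.

Lemma lam_Cmod_le k j : (k < j)%nat -> (N0 < j)%nat ->
  Cmod (lam k) <= omega_ratio q * Cmod (g j).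
Proof.
  intros Hkj HNj. apply Rle_trans with (Cmod (lam (j - 1)%nat)); [apply lam_Cmod_mono; lia|].
  replace j with (S (j - 1)) at 2 by lia.
  apply Omega_Cmod_le; auto. apply lam_in_D; lia.
Qed.

Lemma gamma_sub_lam_ge k j : (k < j)%nat -> (N0 < j)%nat ->
  (1 - omega_ratio q) * Cmod (g j) <= Cmod (g j - lam k).
Proof.
  intros Hkj HNj. pose proof (lam_Cmod_le k j Hkj HNj).
  pose proof (Cmod_sub_ge (g j) (lam k)). lra.
Qed.

Lemma node_ratio_late b i j : (b <= S i)%nat -> (N0 <= S i)%nat -> (S (S i) <= j)%nat ->
  Cmod (g j - g b) / Cmod (g j - lam (S i)) <= late_factor q (j - S (S i)).
Proof.
  intros Hb HNi Hij. remember (j - S (S i))%nat as t eqn:Ht.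
  assert (Hrj : 0 < Cmod (g j)) by (apply (lacunary_pos g q); auto; lia).
  pose proof (omega_ratio_bounds q q_gt1). pose proof (inv_pow_bounds q t q_gt1).
  pose proof (inv_pow_bounds q (S t) q_gt1).
  assert (Hgb : Cmod (g b) <= (/ q) ^ S t * Cmod (g j)).
  { apply Rle_trans with (Cmod (g (S i))); [apply (lacunary_mono g q); auto|].
    pose proof (lacunary_le_inv_pow g q q_gt1 g_growth (S t) (S i)) as Hpow.
    replace (S i + S t)%nat with j in Hpow by lia. exact Hpow. }
  assert (Hlam : Cmod (lam (S i)) <= omega_ratio q * (/ q) ^ t * Cmod (g j)).
  { apply Rle_trans with (omega_ratio q * Cmod (g (S (S i)))).
    - apply Omega_Cmod_le; auto. apply lam_in_D; lia.
    - rewrite Rmult_assoc. apply Rmult_le_compat_l; [lra|].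
      pose proof (lacunary_le_inv_pow g q q_gt1 g_growth t (S (S i))) as Hpow.
      replace (S (S i) + t)%nat with j in Hpow by lia. exact Hpow. }
  assert (Hden : 0 < 1 - omega_ratio q * (/ q) ^ t) by nra.
  unfold late_factor.
  replace ((1 + (/ q) ^ S t) / (1 - omega_ratio q * (/ q) ^ t))
    with ((Cmod (g j) + (/ q) ^ S t * Cmod (g j)) /
          (Cmod (g j) - omega_ratio q * (/ q) ^ t * Cmod (g j)))
    by (field; split; nra).
  apply ratio_le.
  - split; [apply Cmod_ge_0|]. eapply Rle_trans; [apply Cmod_sub_le | lra].
  - split; [nra|]. pose proof (Cmod_sub_ge (g j) (lam (S i))). lra.
Qed.

Lemma node_ratio_early b i j : (b <= S i)%nat -> (S i < j)%nat -> (N0 < j)%nat ->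
  Cmod (g j - g b) / Cmod (g j - lam (S i)) <= 2 / (1 - omega_ratio q).
Proof.
  intros Hb Hij HNj.
  assert (Hrj : 0 < Cmod (g j)) by (apply (lacunary_pos g q); auto; lia).
  pose proof (omega_ratio_bounds q q_gt1).
  replace (2 / (1 - omega_ratio q)) with (2 * Cmod (g j) / ((1 - omega_ratio q) * Cmod (g j)))
    by (field; repeat split; lra).
  apply ratio_le.
  - split; [apply Cmod_ge_0|]. eapply Rle_trans; [apply Cmod_sub_le|].
    pose proof (lacunary_mono g q q_gt1 g_growth b j ltac:(lia)). lra.
  - split; [nra|]. apply gamma_sub_lam_ge; lia.
Qed.

Lemma node_ratio_le b i j : (b <= S i)%nat -> (S i < j)%nat -> (N0 < j)%nat ->
  Cmod (g j - g b) / Cmod (g j - lam (S i)) <=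
  (if Nat.ltb (S i) N0 then 2 / (1 - omega_ratio q) else 1) * late_factor q (j - S (S i)).
Proof.
  intros Hb Hij HNj. pose proof (late_factor_ge1 q (j - S (S i)) q_gt1).
  destruct (Nat.ltb_spec (S i) N0).
  - pose proof (omega_ratio_bounds q q_gt1).
    assert (0 < 2 / (1 - omega_ratio q)) by (apply Rdiv_lt_0_compat; lra).
    eapply Rle_trans; [apply node_ratio_early; auto|]. nra.
  - rewrite Rmult_1_l. apply node_ratio_late; lia.
Qed.

Lemma prod_node_ratio_le (b : nat -> nat) rho : 1 < rho -> (forall i, (b i <= S i)%nat) ->
  exists A, 0 < A /\ forall n j, (n < j)%nat -> (N0 < j)%nat ->
    prodR (fun i => Cmod (g j - g (b i)) / Cmod (g j - lam (S i))) n <= A * rho ^ j.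
Proof.
  intros Hrho Hb. pose proof (omega_ratio_bounds q q_gt1).
  set (E := fun i => if Nat.ltb (S i) N0 then 2 / (1 - omega_ratio q) else 1).
  assert (HE : forall i, 0 <= E i).
  { intros i. unfold E. destruct (Nat.ltb (S i) N0); [apply Rlt_le, Rdiv_lt_0_compat|]; lra. }
  assert (HE_late : forall i, (N0 <= i)%nat -> E i <= 1).
  { intros i Hi. unfold E.
    replace (Nat.ltb (S i) N0) with false by (symmetry; apply Nat.ltb_ge; lia). lra. }
  destruct (prodR_eventually_le E 1 N0) as [AE [HAE HprodE]]; [lra | exact HE | exact HE_late |].
  destruct (late_factor_eventually_le q rho q_gt1 Hrho) as [T HT].
  assert (Hlate : forall t, 1 <= late_factor q t) by (intros; apply late_factor_ge1, q_gt1).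
  destruct (prodR_eventually_le (late_factor q) rho T) as [AL [HAL HprodL]];
    [lra | intros t; specialize (Hlate t); lra | exact HT |].
  exists (AE * AL). split; [nra|]. intros n j Hnj HNj.
  set (L := fun i => late_factor q (j - S (S i))).
  apply Rle_trans with (prodR (fun i => E i * L i) n).
  { apply prodR_le. intros i Hi. split; [apply ratio_nonneg; apply Cmod_ge_0|].
    apply node_ratio_le; auto; lia. }
  (* the late factors run backwards through late_factor q 0, ..., late_factor q (j - 2) *)
  assert (HrevL : prodR L n <= prodR (late_factor q) (j - 1)).
  { apply prodR_le_rev; [lia | exact Hlate |]. intros i Hi. unfold L.
    replace (j - 1 - S i)%nat with (j - S (S i))%nat by lia.
    specialize (Hlate (j - S (S i))%nat). lra. }
  specialize (HprodE n). rewrite pow1, Rmult_1_r in HprodE.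
  specialize (HprodL (j - 1)%nat).
  assert (rho ^ (j - 1) <= rho ^ j) by (apply Rle_pow; [lra | lia]).
  assert (0 <= prodR L n)
    by (apply prodR_nonneg; intros i _; specialize (Hlate (j - S (S i))%nat); unfold L; lra).
  rewrite prodR_mult.
  apply Rle_trans with (AE * (AL * rho ^ (j - 1))).
  - apply Rmult_le_compat; [apply prodR_nonneg; auto | auto | auto | lra].
  - rewrite Rmult_assoc. apply Rmult_le_compat_l; [lra|]. apply Rmult_le_compat_l; lra.
Qed.

Lemma prod_pole_ratio_le m rho : 1 < rho -> exists A, 0 < A /\ forall n,
  prodR (fun i => Cmod (g m - lam (S i)) / Cmod (g m - g (skip m i))) n <= A * rho ^ n.
Proof.
  intros Hrho. destruct (lam_rel_close m rho Hrho) as [K HK].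
  apply prodR_eventually_le with (K := Nat.max K m);
    [lra | intros; apply ratio_nonneg; apply Cmod_ge_0 |].
  intros i Hi. rewrite skip_late by lia.
  assert (0 < Cmod (g m - g (S i))).
  { apply Cmod_gt_0, Cminus_neq0. intros E. apply g_inj in E. lia. }
  apply (Rmult_le_reg_r (Cmod (g m - g (S i)))); [lra|].
  unfold Rdiv. rewrite Rmult_assoc, Rinv_l, Rmult_1_r by lra. apply HK; lia.
Qed.

Lemma Gmn_ratio_eq m n j :
  Cmod (Gmn g lam m n (g j)) / Cmod (Gmn g lam m n (g m)) =
  / Cmod (g j - lam O) * prodR (fun i => Cmod (g j - g (skip m i)) / Cmod (g j - lam (S i))) n *
  (Cmod (g m - lam O) * prodR (fun i => Cmod (g m - lam (S i)) / Cmod (g m - g (skip m i))) n).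
Proof.
  rewrite !Cmod_Gmn by (intros k E; eapply lam_off_g; symmetry; exact E).
  rewrite (prodR_ext (fun i => Cmod (g m - lam (S i)) / Cmod (g m - g (skip m i)))
             (fun i => / (Cmod (g m - g (skip m i)) / Cmod (g m - lam (S i)))))
    by (intros i _; now rewrite Rinv_div).
  rewrite prodR_inv. unfold Rdiv. rewrite Rinv_mult, Rinv_inv. ring.
Qed.

Lemma Gmn_ratio_le m rho : 1 < rho ->
  exists K, 0 <= K /\ forall n j, (n < j)%nat -> (N0 < j)%nat ->
  Cmod (Gmn g lam m n (g j)) / Cmod (Gmn g lam m n (g m)) <= K * (rho ^ 2 / q) ^ j.
Proof.
  intros Hrho.
  destruct (prod_node_ratio_le (skip m) rho Hrho (skip_le m)) as [AX [HAX HX]].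
  destruct (prod_pole_ratio_le m rho Hrho) as [AY [HAY HY]].
  destruct (lacunary_geometric_lb g q q_gt1 g_growth g_inj) as [c0 [Hc0 Hlb]].
  pose proof (omega_ratio_bounds q q_gt1).
  set (Am := Cmod (g m - lam O)).
  assert (HAm : 0 <= Am) by apply Cmod_ge_0.
  set (c1 := (1 - omega_ratio q) * c0).
  assert (Hc1 : 0 < c1) by (unfold c1; nra).
  exists (/ c1 * AX * (Am * AY)). split.
  { apply Rmult_le_pos; [apply Rmult_le_pos; [apply Rlt_le, Rinv_0_lt_compat|]|]; nra. }
  intros n j Hnj HNj. rewrite Gmn_ratio_eq.
  assert (Hqj : 0 < q ^ j) by (apply pow_lt; lra).
  assert (Hpole : / Cmod (g j - lam O) <= / c1 * (/ q) ^ j).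
  { rewrite pow_inv, <- Rinv_mult. apply Rinv_le_contravar; [nra|].
    apply Rle_trans with ((1 - omega_ratio q) * Cmod (g j)); [|apply gamma_sub_lam_ge; lia].
    unfold c1. rewrite Rmult_assoc. apply Rmult_le_compat_l; [lra|]. apply Hlb; lia. }
  assert (Hinv0 : 0 <= / Cmod (g j - lam O)).
  { apply Rlt_le, Rinv_0_lt_compat, Cmod_gt_0, Cminus_neq0. intros E. apply (lam_off_g O j); auto. }
  set (PX := prodR (fun i => Cmod (g j - g (skip m i)) / Cmod (g j - lam (S i))) n).
  set (PY := prodR (fun i => Cmod (g m - lam (S i)) / Cmod (g m - g (skip m i))) n).
  assert (HPX : 0 <= PX) by (apply prodR_nonneg; intros; apply ratio_nonneg; apply Cmod_ge_0).
  assert (HPY : 0 <= PY) by (apply prodR_nonneg; intros; apply ratio_nonneg; apply Cmod_ge_0).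
  assert (HPY' : PY <= AY * rho ^ j).
  { apply Rle_trans with (AY * rho ^ n); [apply HY|].
    apply Rmult_le_compat_l; [lra | apply Rle_pow; [lra | lia]]. }
  apply Rle_trans with (/ c1 * (/ q) ^ j * (AX * rho ^ j) * (Am * (AY * rho ^ j))).
  - apply Rmult_le_compat; [apply Rmult_le_pos; auto | apply Rmult_le_pos; auto | |].
    + apply Rmult_le_compat; [exact Hinv0 | exact HPX | exact Hpole | apply HX; lia].
    + apply Rmult_le_compat_l; [exact HAm | exact HPY'].
  - replace (rho ^ 2 / q) with (rho * rho * / q) by (unfold Rdiv; ring).
    rewrite !Rpow_mult_distr. right; ring.
Qed.

Lemma weighted_Gmn_ratio_le m : exists C theta N1, 0 <= C /\ 0 <= theta < 1 /\
  forall n j, (N1 <= n)%nat -> (n < j)%nat ->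
    v j * (Cmod (Gmn g lam m n (g j)) / Cmod (Gmn g lam m n (g m))) ^ 2 <= C * theta ^ j.
Proof.
  set (rho := sqrt (sqrt q)).
  assert (Hrho : 1 < rho).
  { unfold rho. rewrite <- sqrt_1. apply sqrt_lt_1; [lra | apply sqrt_pos |].
    rewrite <- sqrt_1. apply sqrt_lt_1; lra. }
  assert (Hq4 : rho ^ 4 = q).
  { unfold rho. change 4%nat with (2 * 2)%nat. rewrite pow_mult, !pow2_sqrt; [reflexivity | lra |].
    apply sqrt_pos. }
  destruct (Gmn_ratio_le m rho Hrho) as [K [HK Hratio]].
  destruct (weight_le_geometric v rho v_pos v_small Hrho) as [Kv [Av [HAv Hv]]].
  set (y := rho ^ 2 / q) in *.
  (* with q = rho^4 the decay y^2 = rho^-4 beats the growth rho of the weights *)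
  assert (Hy : y = / rho ^ 2) by (unfold y; rewrite <- Hq4; field; lra).
  exists (Av * K ^ 2), (rho * y ^ 2), (Nat.max N0 Kv). split; [|split].
  - nra.
  - assert (Htheta : rho * y ^ 2 = / rho ^ 3) by (rewrite Hy; field; lra).
    rewrite Htheta. split; [apply Rlt_le, Rinv_0_lt_compat, pow_lt; lra|].
    rewrite <- Rinv_1. apply Rinv_lt_contravar.
    + rewrite Rmult_1_l. apply pow_lt; lra.
    + apply Rlt_pow_R1; [lra | lia].
  - intros n j Hn Hj.
    specialize (Hratio n j Hj ltac:(lia)). specialize (Hv j ltac:(lia)).
    set (R := Cmod (Gmn g lam m n (g j)) / Cmod (Gmn g lam m n (g m))) in *.
    assert (HR : 0 <= R) by (apply ratio_nonneg; apply Cmod_ge_0).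
    assert (HR2 : R ^ 2 <= (K * y ^ j) ^ 2) by (apply pow_incr; lra).
    apply Rle_trans with (Av * rho ^ j * (K * y ^ j) ^ 2).
    + apply Rmult_le_compat; [apply Rlt_le, v_pos | apply pow2_ge_0 | exact Hv | exact HR2].
    + assert (Hyy : (y ^ j) ^ 2 = (y ^ 2) ^ j) by (rewrite <- !pow_mult, Nat.mul_comm; reflexivity).
      rewrite Rpow_mult_distr, Rpow_mult_distr, Hyy. right; ring.
Qed.

Variable a : nat -> C.
Hypothesis a_l2 : in_l2v v a.
Hypothesis a_H : forall k, H_is g v a (lam k) 0%C.

Let majorant (C theta : R) (j : nat) : R := / 2 * (Cmod (a j) ^ 2 * v j + C * theta ^ j).

Lemma ex_series_majorant C theta : 0 <= theta < 1 -> ex_series (majorant C theta).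
Proof.
  intros Htheta.
  assert (Hgeom : ex_series (fun j => C * theta ^ j)).
  { exists (C * / (1 - theta)).
    exact (is_series_scal_l C _ _ (is_series_geom theta ltac:(rewrite Rabs_pos_eq; lra))). }
  exact (ex_series_scal_l (/ 2) _ (ex_series_plus _ _ a_l2 Hgeom)).
Qed.

Lemma coef_le_tail m n C theta : (m <= n)%nat -> 0 <= theta < 1 ->
  (forall j, (n < j)%nat ->
     v j * (Cmod (Gmn g lam m n (g j)) / Cmod (Gmn g lam m n (g m))) ^ 2 <= C * theta ^ j) ->
  Cmod (a m) * v m <= Series (fun k => majorant C theta (S n + k)).
Proof.
  intros Hmn Htheta Hest.
  set (G := Gmn g lam m n) in *.
  set (T := fun j => (a j * RtoC (v j) * G (g j))%C).
  assert (HT : is_series T (RtoC 0)).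
  { apply (pf_span_series g v a lam n); auto. apply Gmn_pf_span, lam_inj. }
  assert (Htail : is_series (fun k => T (S n + k)%nat) (- T m)%C).
  { apply is_series_tail_single; auto. intros j Hj Hjm.
    unfold T, G. rewrite Gmn_zero_at by auto. ring. }
  set (Gm := Cmod (G (g m))) in *.
  assert (HGm : 0 < Gm) by (apply Cmod_gt_0, Gmn_nonzero_at_m; auto).
  assert (Hbound : forall k, Cmod (T (S n + k)%nat) <= Gm * majorant C theta (S n + k)).
  { intros k. set (j := (S n + k)%nat).
    specialize (Hest j ltac:(unfold j; lia)).
    set (R := Cmod (G (g j)) / Gm) in *.
    assert (HGj : Cmod (G (g j)) = Gm * R) by (unfold R; field; lra).
    unfold T. rewrite !Cmod_mult, Cmod_R, Rabs_pos_eq, HGj by (left; apply v_pos).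
    pose proof (v_pos j). pose proof (pow2_ge_0 (Cmod (a j) - R)).
    assert (Hamgm : Cmod (a j) * v j * R <= / 2 * (Cmod (a j) ^ 2 * v j + v j * R ^ 2)) by nra.
    unfold majorant. nra. }
  assert (Hex : ex_series (fun k => Gm * majorant C theta (S n + k))).
  { apply (ex_series_scal_l Gm (fun k => majorant C theta (S n + k))).
    apply (ex_series_incr_n (majorant C theta) (S n)), ex_series_majorant, Htheta. }
  pose proof (Cmod_series_le _ _ _ Htail Hbound Hex) as Hle.
  rewrite Series_scal_l in Hle.
  replace (Cmod (- T m)%C) with (Gm * (Cmod (a m) * v m)) in Hle.
  - apply (Rmult_le_reg_l Gm); auto.
  - unfold T. rewrite Cmod_opp, !Cmod_mult, Cmod_R, Rabs_pos_eq by (left; apply v_pos).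
    unfold Gm. ring.
Qed.

Lemma coefficient_vanishes m : a m = 0%C.
Proof.
  destruct (weighted_Gmn_ratio_le m) as [C [theta [N1 [HC [Htheta Hest]]]]].
  assert (Hle : Rbar_le (Cmod (a m) * v m) 0).
  { apply (is_lim_seq_le_loc (fun _ => Cmod (a m) * v m)
             (fun n => Series (fun k => majorant C theta (S n + k)))).
    - exists (Nat.max m N1). intros n Hn. apply coef_le_tail; [lia | exact Htheta |].
      intros j Hj. apply Hest; lia.
    - apply is_lim_seq_const.
    - apply Series_tail_lim, ex_series_majorant, Htheta. }
  simpl in Hle. pose proof (Cmod_ge_0 (a m)). pose proof (v_pos m).
  apply Cmod_eq_0. nra.
Qed.

End Uniqueness.

Theorem lemma8 (g : nat -> C) (v : nat -> R) (lam : nat -> C) :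
  lacunary g ->
  admissible_weight g v ->
  admissible_Lambda g lam ->
  is_lim_seq (fun k => v k / Vs v k) 0 ->
  exact_v_perturbation g v lam ->
  uniqueness_seq g v lam.
Proof.
  intros [g_inj [q [q_gt1 g_growth]]] [v_pos _] [lam_inj [lam_nonzero [lam_off_g lam_step]]]
    v_small [M [N0 lam_in_D]] a a_l2 a_H m.
  exact (coefficient_vanishes g v lam q M N0 g_inj q_gt1 g_growth v_pos v_small lam_inj
           lam_nonzero lam_off_g lam_step lam_in_D a a_l2 a_H m).
Qed.
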